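(* Assume coarse consistency, coarse positivity and coarse time-varying conditional parallel trends (all defined in the context). Then the true coarse blip functions $\gamma^{c*}$ satisfy, for all $0\le m<k\le K$, almost surely on $\{T\ge m\}$, $$E[H^c_{mk}(\gamma^{c*})-H^c_{m,k-1}(\gamma^{c*})\mid T\ge m,A_m,\bar L_m]=E[H^c_{mk}(\gamma^{c*})-H^c_{m,k-1}(\gamma^{c*})\mid T>m,\bar L_m]. \qquad ( * )$$ Moreover, $\gamma^{c*}$ is the unique vector of functions with this property. If $\gamma^c=(\gamma^c_{mk}(\bar l_m,a_m))_{0\le m<k\le K}$ satisfies $( * )$ for all $0\le m<k\le K$, then $\gamma^c_{mk}(\bar L_m,A_m)=\gamma^{c*}_{mk}(\bar L_m,A_m)$ almost surely on $\{T=m\}$ for all $m<k$.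
   Context: **Data.** Subjects are observed at times $0,1,\dots,K$. At each time $m$ the data $(Z_m,Y_m,A_m)$ are collected in that temporal order: - $A_m$ is the treatment at time $m$, coded so that $0$ is the baseline level; - $Y_m$ is the outcome; - $Z_m$ are other covariates. For a time-varying variable $X$, write $\bar X_m=(X_0,\dots,X_m)$; negative-index variables are null. Define $\bar L_m=(\bar Z_m,\bar Y_{m-1},\bar A_{m-1})$. **Treatment initiation.** $T=\min\{m:A_m\neq 0\}\in\{0,\dots,K,\infty\}$, with $T=\infty$ if treatment is never initiated. **Counterfactuals.** $Y_k(m,a_m)$ is the counterfactual outcome at time $k$ under first initiating treatment at time $m$ at value $a_m$. $Y_k(\infty)$ is the counterfactual under never initiating. Also $Y_k(m,a_m)=Y_k(\infty)$ for $k\le m$. **Assumptions.** - Coarse consistency: $Y_k=Y_k(T,A_T)$ on $\{T<k\}$ and $Y_k=Y_k(\infty)$ on $\{T\ge k\}$. - Coarse positivity: for every $m$, $P(A_m=0\mid\bar L_m,T\ge m)>0$ (positive density at $0$) almost surely on $\{T\ge m\}$. - Coarse parallel trends: for all $m<k$, $$E[Y_k(\infty)-Y_{k-1}(\infty)\mid T=m,A_m,\bar L_m]=E[Y_k(\infty)-Y_{k-1}(\infty)\mid T>m,\bar L_m].$$ **Coarse blip functions.** $$\gamma^{c*}_{mk}(\bar l_m,a_m)\equiv E[Y_k(m,a_m)-Y_k(\infty)\mid T=m,A_m=a_m,\bar L_m=\bar l_m].$$ **Blipped-down outcomes.** - $H^c_{mk}(\gamma^c)\equiv Y_k-\sum_{j=m}^{k-1}\gamma^c_{jk}(\bar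 L_j,A_j)\mathbb 1\{T=j\}$ for $k>m$; - $H^c_{mm}(\gamma^c)\equiv Y_m$. *)

From HB Require Import structures.
From mathcomp Require Import all_boot all_order all_algebra.
From mathcomp Require Import all_classical all_reals all_analysis.
Set Implicit Arguments. Unset Strict Implicit. Unset Printing Implicit Defensive.
Import Order.TTheory GRing.Theory Num.Theory.
Local Open Scope classical_set_scope.
Local Open Scope ring_scope.

Section CoarseDefs.
Context {R : realType} {d : measure_display} {Omega : measurableType d}.

(* {T >= m}: no treatment before time m (T = min{j : A_j <> 0}, or oo) *)
Definition Tge (A : nat -> Omega -> R) (m : nat) : set Omega :=
  [set w | forall j, (j < m)%N -> A j w = 0].
Definition Teq (A : nat -> Omega -> R) (m : nat) : set Omega :=
  Tge A m `&` [set w | A m w != 0].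
Definition Tgt (A : nat -> Omega -> R) (m : nat) : set Omega := Tge A m.+1.

(* generators of sigma(Lbar_m), Lbar_m = (Zbar_m, Ybar_{m-1}, Abar_{m-1}) *)
Definition hist_gen {dz : measure_display} {Zt : measurableType dz}
  (Z : nat -> Omega -> Zt) (Y A : nat -> Omega -> R) (m : nat) : set (set Omega) :=
  [set S | (exists j (U : set Zt), (j <= m)%N /\ measurable U /\ S = Z j @^-1` U)
        \/ (exists j (U : set R), (j < m)%N /\ measurable U /\ S = Y j @^-1` U)
        \/ (exists j (U : set R), (j < m)%N /\ measurable U /\ S = A j @^-1` U)].

Definition Lsig {dz : measure_display} {Zt : measurableType dz}
  (Z : nat -> Omega -> Zt) (Y A : nat -> Omega -> R) (m : nat) : set (set Omega) :=
  <<s hist_gen Z Y A m >>.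

Definition LAsig {dz : measure_display} {Zt : measurableType dz}
  (Z : nat -> Omega -> Zt) (Y A : nat -> Omega -> R) (m : nat) : set (set Omega) :=
  <<s hist_gen Z Y A m `|` [set S | exists U : set R, measurable U /\ S = A m @^-1` U] >>.

(* f is a version of E[X | B, G] on the event B: f is G-measurable, X and f are
   integrable on B, and E[X 1_B 1_S] = E[f 1_B 1_S] for every S in G. *)
Definition cexp_version (P : probability Omega R) (G : set (set Omega))
  (B : set Omega) (X f : Omega -> R) : Prop :=
  [/\ (forall U : set R, measurable U -> G (f @^-1` U)),
      P.-integrable B (EFin \o X),
      P.-integrable B (EFin \o f) &
      forall S, G S ->
        (\int[P]_(w in B `&` S) (X w)%:E = \int[P]_(w in B `&` S) (f w)%:E)%E].

(* blipped-down outcome H^c_{mk}(gamma); for k = m the sum is empty, giving Y_m *)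
Definition Hc (Y A : nat -> Omega -> R) (gamma : nat -> nat -> Omega -> R)
  (m k : nat) (w : Omega) : R :=
  Y k w - \sum_(m <= j < k) gamma j k w * (\1_(Teq A j) w : R).

Definition coarse_star {dz : measure_display} {Zt : measurableType dz}
  (P : probability Omega R) (Z : nat -> Omega -> Zt) (Y A : nat -> Omega -> R)
  (gamma : nat -> nat -> Omega -> R) (m k : nat) : Prop :=
  forall f g : Omega -> R,
    cexp_version P (LAsig Z Y A m) (Tge A m)
      (fun w => Hc Y A gamma m k w - Hc Y A gamma m k.-1 w) f ->
    cexp_version P (Lsig Z Y A m) (Tgt A m)
      (fun w => Hc Y A gamma m k w - Hc Y A gamma m k.-1 w) g ->
    {ae P, forall w, Tge A m w -> f w = g w}.

End CoarseDefs.

From HB Require Import structures.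
From mathcomp Require Import all_boot all_order all_algebra.
From mathcomp Require Import all_classical all_reals all_analysis.
From mathcomp Require Import measurable_realfun lebesgue_measure.
From mathcomp Require Import zify ring.
Set Implicit Arguments. Unset Strict Implicit. Unset Printing Implicit Defensive.
Import Order.TTheory GRing.Theory Num.Theory.
Local Open Scope classical_set_scope.
Local Open Scope ring_scope.

(* On [{T = j}], [H^c_{mk}(gstar) = Y_k - gstar_{jk}] and [Y_k = Y_k(j, A_j)] by
   consistency, so by the definition of [gstar_{jk}] the increment
   [H^c_{mk} - H^c_{m,k-1}] and [Y_k(oo) - Y_{k-1}(oo)] have the same integral over
   every [(Lbar_j, A_j)]-measurable part of [{T = j}]; on [{T >= k}] they coincide.
   Splitting [{T > m}] into the [{T = j}], [m < j < k], and [{T >= k}], the two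
   conditional means of (star) are those of [Y_k(oo) - Y_{k-1}(oo)], so (star) on
   [{T = m}] is parallel trends, while on [{T > m}] it holds because [A_m = 0] there.
   Uniqueness is by induction on [k - m]: if [gamma] is correct for all smaller gaps,
   the increments for [gamma] and [gstar] differ by [(gamma_{mk} - gstar_{mk}) 1_{T = m}],
   which is [(Lbar_m, A_m)]-measurable, so (star) for both forces it to vanish. *)

Section conditional_expectation.
Context {R : realType} {d : measure_display} {Omega : measurableType d}.
Variable P : probability Omega R.
Local Open Scope ereal_scope.

Lemma measurable_gen {H : set (set Omega)} :
  H `<=` measurable -> <<s H >> `<=` measurable.
Proof. by move=> HM; apply: smallest_sub => //; exact: sigma_algebra_measurable. Qed.

Lemma measurable_fun_genP (H : set (set Omega)) (f : Omega -> R) :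
  measurable_fun (setT : set (g_sigma_algebraType H)) (f : g_sigma_algebraType H -> R)
  <-> (forall U, measurable U -> <<s H >> (f @^-1` U)).
Proof.
split=> [mf U mU|hf _ U mU]; first by have := mf measurableT U mU; rewrite setTI.
by rewrite setTI; exact: hf.
Qed.

Lemma integral_mrestr (B D : set Omega) (mB : measurable B) (mD : measurable D)
  (f : Omega -> \bar R) : measurable_fun D f ->
  \int[mrestr P mB]_(x in D) f x = \int[P]_(x in D `&` B) f x.
Proof.
move=> mf; rewrite -{1}(setUIDK D B) integral_setU //; first last.
- by apply/disj_setPS => x [[_ Bx] [_ nBx]].
- by rewrite setUIDK.
- exact: measurableD.
- exact: measurableI.
rewrite [X in _ + X]null_set_integral //; first last.
- by change (P ((D `\` B) `&` B) = 0); rewrite setDKI measure0.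
- by apply: measurable_funS mf => //; exact: subDsetl.
- exact: measurableD.
rewrite adde0; apply: eq_measure_integral => C mC CDB.
by change (P (C `&` B) = P C); rewrite setIidl // => x /CDB [].
Qed.

(* The proofs [HM], [mB] and [intX] are unused in the bodies; they are parameters
   so that the measure and charge instances declared below can be inferred. *)
Definition gen_trace (H : set (set Omega)) (HM : H `<=` measurable)
  (B : set Omega) (mB : measurable B) : set (g_sigma_algebraType H) -> \bar R :=
  fun S => P (S `&` B).

Definition gen_charge (H : set (set Omega)) (HM : H `<=` measurable)
  (X : Omega -> \bar R) (intX : P.-integrable setT X) :
  set (g_sigma_algebraType H) -> \bar R :=
  fun S => \int[P]_(x in S) X x.

Section generated_sigma_algebra.
Variables (H : set (set Omega)) (HM : H `<=` measurable).
Local Notation G := (g_sigma_algebraType H).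

Lemma measurable_fun_gen {d' : measure_display} {T' : measurableType d'}
  (D : set Omega) (f : G -> T') :
  measurable D -> measurable_fun setT f -> measurable_fun D (f : Omega -> T').
Proof.
move=> mD mf _ U mU; apply: measurableI => //.
by have := mf measurableT U mU; rewrite setTI => /(measurable_gen HM).
Qed.

Section trace_measure.
Variables (B : set Omega) (mB : measurable B).

Local Notation mu := (gen_trace HM mB).

Let gen_trace0 : mu set0 = 0.
Proof. by rewrite /gen_trace set0I measure0. Qed.

Let gen_trace_ge0 (S : set G) : 0 <= mu S.
Proof. exact: measure_ge0. Qed.

Let gen_trace_sigma_additive : semi_sigma_additive mu.
Proof.
move=> F mF tF mU; rewrite /gen_trace setI_bigcupl.
apply: measure_semi_sigma_additive.
- by move=> n; exact: measurableI (measurable_gen HM (mF n)) mB.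
- apply/trivIsetP => i j _ _ ij.
  move/trivIsetP : tF => /(_ i j Logic.I Logic.I ij).
  by rewrite setIACA => ->; rewrite set0I.
- by rewrite -setI_bigcupl; exact: measurableI (measurable_gen HM mU) mB.
Qed.

HB.instance Definition _ := isMeasure.Build _ _ _ mu
  gen_trace0 gen_trace_ge0 gen_trace_sigma_additive.

Let gen_trace_fin : fin_num_fun mu.
Proof.
move=> S mS; apply: fin_num_measure.
exact: measurableI (measurable_gen HM mS) mB.
Qed.

HB.instance Definition _ := @Measure_isFinite.Build _ _ _ mu gen_trace_fin.

Let measurable_idG : measurable_fun setT (id : Omega -> G).
Proof. by move=> _ U mU; rewrite setTI; exact (measurable_gen HM mU). Qed.

Lemma ge0_integral_gen_trace (S : set G) (f : Omega -> \bar R) : measurable S ->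
  measurable_fun (setT : set G) (f : G -> \bar R) -> (forall x, 0 <= f x) ->
  \int[mu]_(x in S) f x = \int[P]_(x in (S : set Omega) `&` B) f x.
Proof.
move=> mS mf f0.
change (\int[pushforward (mrestr P mB) (id : Omega -> G)]_(x in S) f x =
  \int[P]_(x in (S : set Omega) `&` B) f x).
have mS' : measurable (S : set Omega) by exact (measurable_gen HM mS).
rewrite (ge0_integral_pushforward measurable_idG) //; last exact: measurable_funTS.
by rewrite integral_mrestr //; exact: measurable_fun_gen mf.
Qed.

Lemma integral_gen_trace (S : set G) (f : Omega -> \bar R) : measurable S ->
  measurable_fun (setT : set G) (f : G -> \bar R) ->
  \int[mu]_(x in S) f x = \int[P]_(x in (S : set Omega) `&` B) f x.
Proof.
move=> mS mf; rewrite integralE [RHS]integralE.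
rewrite !ge0_integral_gen_trace //.
- exact: measurable_funeneg.
- exact: measurable_funepos.
Qed.

Lemma integrable_gen_trace (f : Omega -> \bar R) :
  measurable_fun (setT : set G) (f : G -> \bar R) ->
  mu.-integrable setT f <-> P.-integrable B f.
Proof.
move=> mf.
have maf : measurable_fun (setT : set G) ((abse \o f) : G -> \bar R).
  exact: measurableT_comp mf.
have Eabs : \int[mu]_(x in setT) `|f x| = \int[P]_(x in B) `|f x|.
  rewrite (ge0_integral_gen_trace measurableT maf (fun x => abse_ge0 _)).
  by congr integral; exact: setTI.
split => /integrableP [_ hf]; apply/integrableP; split.
- exact: measurable_fun_gen mf.
- by rewrite -Eabs.
- exact: mf.
- by rewrite Eabs.
Qed.

End trace_measure.

Section indefinite_integral.
Variables (X : Omega -> \bar R) (intX : P.-integrable setT X).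

Local Notation nu := (gen_charge HM intX).

Let gen_charge0 : nu set0 = 0.
Proof. by rewrite /gen_charge integral_set0. Qed.

Let gen_charge_fin S : measurable S -> nu S \is a fin_num.
Proof.
move=> mS; have mS' : measurable (S : set Omega) by exact (measurable_gen HM mS).
by apply: integrable_fin_num => //=; exact: integrableS intX.
Qed.

Let gen_charge_sigma_additive : semi_sigma_additive nu.
Proof.
move=> F mF tF mU.
exact (@charge_semi_sigma_additive _ _ _ (induced_charge intX) F
  (fun n => measurable_gen HM (mF n)) tF (measurable_gen HM mU)).
Qed.

HB.instance Definition _ := isCharge.Build _ _ _ nu
  gen_charge0 gen_charge_fin gen_charge_sigma_additive.

End indefinite_integral.

(* The version is the Radon-Nikodym derivative of [S |-> E[X 1_(B `&` S)]] with
   respect to [S |-> P(B `&` S)] on [<<s H >>]. *)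
Lemma cexp_version_exists (B : set Omega) (mB : measurable B) (X : Omega -> R) :
  P.-integrable B (EFin \o X) -> exists f, cexp_version P <<s H >> B X f.
Proof.
move=> intX.
have intXB : P.-integrable setT ((EFin \o X) \_ B) by apply/(integrable_mkcond _ mB).
pose nu := gen_charge HM intXB; pose mu := gen_trace HM mB.
have nu_mu : nu `<< mu.
  apply/null_content_dominatesP => S mS muS0.
  have mS' : measurable (S : set Omega) by exact (measurable_gen HM mS).
  rewrite /nu /gen_charge -integral_mkcondr null_set_integral //.
  - exact: measurableI.
  - by apply: measurable_funS (measurable_int _ intX) => //; exact: subIsetr.
pose g := Radon_Nikodym nu mu; pose f x := fine (g x).
have mg : measurable_fun (setT : set G) g.
  by apply: measurable_int; exact: Radon_Nikodym_integrable.
have mf : measurable_fun (setT : set G) (f : G -> R).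
  exact: measurableT_comp (fine_measurable measurableT) mg.
have gf x : g x = (f x)%:E by rewrite /f fineK //; exact: Radon_Nikodym_fin_num.
have mEf : measurable_fun (setT : set G) (EFin \o f) by exact: measurableT_comp mf.
exists f; split => //.
- exact/measurable_fun_genP.
- apply/(integrable_gen_trace mB mEf).
  apply: (eq_integrable measurableT g) (Radon_Nikodym_integrable nu_mu) => x _.
  exact: gf.
- move=> S mS; rewrite setIC integral_mkcondr.
  change (nu S = \int[P]_(w in S `&` B) (f w)%:E).
  transitivity (\int[mu]_(x in S) g x); first exact: Radon_Nikodym_integral.
  rewrite -(integral_gen_trace mB mS mEf).
  by apply: eq_integral => x _; exact: gf.
Qed.

Lemma cexp_version_ae_unique (B : set Omega) (mB : measurable B) (f1 f2 : Omega -> R) :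
  (forall U, measurable U -> <<s H >> (f1 @^-1` U)) ->
  (forall U, measurable U -> <<s H >> (f2 @^-1` U)) ->
  P.-integrable B (EFin \o f1) ->
  (forall S, <<s H >> S ->
     \int[P]_(w in B `&` S) (f1 w)%:E = \int[P]_(w in B `&` S) (f2 w)%:E) ->
  {ae P, forall w, B w -> f1 w = f2 w}.
Proof.
move=> /measurable_fun_genP h1 /measurable_fun_genP h2 i1 e12.
have m1 : measurable_fun (setT : set G) (EFin \o f1) by exact: measurableT_comp.
have m2 : measurable_fun (setT : set G) (EFin \o f2) by exact: measurableT_comp.
have [N [mN N0 sN]] : ae_eq (gen_trace HM mB) setT (EFin \o f1) (EFin \o f2).
  apply: integral_ae_eq => //; first exact/(integrable_gen_trace mB m1).
  move=> S _ mS; rewrite !integral_gen_trace // !(setIC (S : set Omega)).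
  exact: e12.
exists (N `&` B); split => //; first exact: measurableI (measurable_gen HM mN) mB.
move=> w /= nw; split; last by apply: contra_notP nw.
by apply: sN => h; apply: nw => Bw; have [] := h Logic.I.
Qed.

End generated_sigma_algebra.
End conditional_expectation.

Section treatment_initiation.
Context {R : realType} {d : measure_display} {Omega : measurableType d}.
Variable A : nat -> Omega -> R.

Lemma Tge0 : Tge A 0 = setT.
Proof. by apply/seteqP; split => w // _ j; rewrite ltn0. Qed.

Lemma TgeS n : Tge A n.+1 = Tge A n `&` A n @^-1` [set 0].
Proof.
apply/seteqP; split => w /=.
- by move=> h; split; [move=> j jn; apply: h; lia | apply: h].
- move=> [h1 h2] j; rewrite ltnS leq_eqVlt => /orP[/eqP -> //|]; exact: h1.
Qed.

Lemma Tge_subset i j : (i <= j)%N -> Tge A j `<=` Tge A i.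
Proof. by move=> ij w h l li; apply: h; lia. Qed.

Lemma Teq_subset_Tge m : Teq A m `<=` Tge A m.
Proof. by move=> w []. Qed.

Lemma Tgt_subset_Tge m : Tgt A m `<=` Tge A m.
Proof. exact: Tge_subset. Qed.

Lemma Teq_notTge i j w : (i < j)%N -> Teq A i w -> ~ Tge A j w.
Proof. by move=> ij [_ /negP Ai] h; apply/Ai/eqP/h. Qed.

Lemma Teq_inj i j w : Teq A i w -> Teq A j w -> i = j.
Proof.
move=> hi hj; case: (ltngtP i j) => // [ij|ji].
- by case: (Teq_notTge ij hi); exact: Teq_subset_Tge.
- by case: (Teq_notTge ji hj); exact: Teq_subset_Tge.
Qed.

Lemma TgeE m : Tge A m = Teq A m `|` Tgt A m.
Proof.
apply/seteqP; split => w; last by case=> [/Teq_subset_Tge|/Tgt_subset_Tge].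
move=> h; have [/eqP Am0|Am0] := boolP (A m w == 0); last by left.
by right; rewrite /Tgt TgeS.
Qed.

Lemma Tge_or_Teq k w : Tge A k w \/ exists2 j, (j < k)%N & Teq A j w.
Proof.
elim: k => [|k [h|[j jk h]]]; first by left; rewrite Tge0.
- by move: h; rewrite TgeE => -[h|h]; [right; exists k|left].
- by right; exists j => //; lia.
Qed.

End treatment_initiation.

Section history.
Context {R : realType} {d : measure_display} {Omega : measurableType d}.
Variables (dz : measure_display) (Zt : measurableType dz)
  (Z : nat -> Omega -> Zt) (Y A : nat -> Omega -> R).

Definition histA_gen m := hist_gen Z Y A m `|`
  [set S | exists U : set R, measurable U /\ S = A m @^-1` U].

Lemma Lsig_mono m j : (m <= j)%N -> Lsig Z Y A m `<=` Lsig Z Y A j.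
Proof.
move=> mj; apply: sub_sigma_algebra2 => S.
case=> [[i [U [? [? ->]]]]|[[i [U [? [? ->]]]]|[i [U [? [? ->]]]]]].
- by left; exists i, U; split => //; lia.
- by right; left; exists i, U; split => //; lia.
- by right; right; exists i, U; split => //; lia.
Qed.

Lemma Lsig_sub_LAsig m j : (m <= j)%N -> Lsig Z Y A m `<=` LAsig Z Y A j.
Proof.
move=> mj S /(Lsig_mono mj); apply: sub_sigma_algebra2 => T hT; by left.
Qed.

Lemma LAsigI m S1 S2 :
  LAsig Z Y A m S1 -> LAsig Z Y A m S2 -> LAsig Z Y A m (S1 `&` S2).
Proof. exact: (@measurableI _ (g_sigma_algebraType (histA_gen m))). Qed.

Lemma Tge_Lsig m n : (n <= m)%N -> Lsig Z Y A m (Tge A n).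
Proof.
elim: n => [|n IH] nm; first by rewrite Tge0; exact: (@measurableT _ (g_sigma_algebraType _)).
rewrite TgeS; apply: (@measurableI _ (g_sigma_algebraType (hist_gen Z Y A m))).
- by apply: IH; lia.
- by apply: sub_gen_smallest; right; right; exists n, [set 0]; split => //; lia.
Qed.

Lemma Tge_LAsig m : LAsig Z Y A m (Tge A m).
Proof. exact (Lsig_sub_LAsig (leqnn m) (Tge_Lsig (leqnn m))). Qed.

Lemma preimage_A_LAsig m (U : set R) : measurable U -> LAsig Z Y A m (A m @^-1` U).
Proof. by move=> mU; apply: sub_gen_smallest; right; exists U. Qed.

Lemma Teq_LAsig m : LAsig Z Y A m (Teq A m).
Proof.
have -> : Teq A m = Tge A m `&` A m @^-1` (~` [set 0]).
  by apply/seteqP; split => w [h h']; split => //; exact/eqP.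
apply: LAsigI; first exact: Tge_LAsig.
by apply: preimage_A_LAsig; apply: measurableC.
Qed.

Lemma Tgt_LAsig m : LAsig Z Y A m (Tgt A m).
Proof.
rewrite /Tgt TgeS; apply: LAsigI; [exact: Tge_LAsig|exact: preimage_A_LAsig].
Qed.

(* On [{T > m}] we have [A_m = 0], so [LAsig m] and [Lsig m] have the same trace. *)
Lemma LAsig_trace_Tgt m S : LAsig Z Y A m S ->
  exists2 S', Lsig Z Y A m S' & S `&` Tgt A m = S' `&` Tgt A m.
Proof.
pose C := [set S | exists2 S', Lsig Z Y A m S' & S `&` Tgt A m = S' `&` Tgt A m].
suff : LAsig Z Y A m `<=` C by move=> h /h.
have [L0 LC LU] := @smallest_sigma_algebra _ setT (hist_gen Z Y A m).
apply: smallest_sub.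
  split.
  - by exists set0.
  - move=> S0 [S' LS' e]; exists (setT `\` S'); first exact: LC.
    apply/seteqP; split => w [[_ nS] hw]; split => //; split => // h.
    + by apply: nS; have : (S' `&` Tgt A m) w by []; rewrite -e => -[].
    + by apply: nS; have : (S0 `&` Tgt A m) w by []; rewrite e => -[].
  - move=> F hF; have {}hF k : exists S',
        Lsig Z Y A m S' /\ F k `&` Tgt A m = S' `&` Tgt A m.
      by have [S' ? ?] := hF k; exists S'.
    have [G hG] := choice hF.
    exists (\bigcup_k G k); first by apply: LU => n; have [] := hG n.
    apply/seteqP; split => w [[k _ hk] hw]; split => //; exists k => //;
      have [_ e] := hG k.
    + by have : (F k `&` Tgt A m) w by []; rewrite e => -[].
    + by have : (G k `&` Tgt A m) w by []; rewrite -e => -[].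
move=> S0 [h|[U [mU ->]]]; first by exists S0 => //; exact: sub_gen_smallest.
have Am0 w : Tgt A m w -> A m w = 0 by apply.
have [U0|nU0] := pselect (U 0).
- exists setT; first exact: (@measurableT _ (g_sigma_algebraType _)).
  by apply/seteqP; split => w [h hw]; split => //=; rewrite Am0.
- exists set0 => //; apply/seteqP; split => w [h hw] //=.
  by move: h => /=; rewrite Am0.
Qed.

Section measurability.
Hypotheses (mZ : forall j, measurable_fun setT (Z j))
  (mY : forall j, measurable_fun setT (Y j))
  (mA : forall j, measurable_fun setT (A j)).

Lemma hist_gen_measurable m : hist_gen Z Y A m `<=` measurable.
Proof.
move=> S [[j [U [_ [mU ->]]]]|[[j [U [_ [mU ->]]]]|[j [U [_ [mU ->]]]]]].
- by rewrite -[X in measurable X]setTI; exact: mZ.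
- by rewrite -[X in measurable X]setTI; exact: mY.
- by rewrite -[X in measurable X]setTI; exact: mA.
Qed.

Lemma histA_gen_measurable m : histA_gen m `<=` measurable.
Proof.
move=> S [/hist_gen_measurable //|[U [mU ->]]].
by rewrite -[X in measurable X]setTI; exact: mA.
Qed.

Lemma Lsig_measurable m : Lsig Z Y A m `<=` measurable.
Proof. exact: measurable_gen (@hist_gen_measurable m). Qed.

Lemma LAsig_measurable m : LAsig Z Y A m `<=` measurable.
Proof. exact: measurable_gen (@histA_gen_measurable m). Qed.

Lemma Tge_measurable n : measurable (Tge A n).
Proof. exact (@Lsig_measurable n _ (Tge_Lsig (leqnn n))). Qed.

Lemma Teq_measurable n : measurable (Teq A n).
Proof. exact (@LAsig_measurable n _ (Teq_LAsig (m:=n))). Qed.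

Lemma Tgt_measurable n : measurable (Tgt A n).
Proof. exact (@LAsig_measurable n _ (Tgt_LAsig (m:=n))). Qed.

End measurability.
End history.

Lemma nat_down_ind (Q : nat -> Prop) lo k : (lo <= k)%N -> Q k ->
  (forall i, (lo <= i < k)%N -> Q i.+1 -> Q i) -> Q lo.
Proof.
move=> lok Qk Qstep.
suff QkB : forall n, (n <= k - lo)%N -> Q (k - n)%N.
  by have := QkB (k - lo)%N (leqnn _); rewrite subKn.
elim=> [|n IH] hn; first by rewrite subn0.
apply: Qstep; first by apply/andP; split; lia.
have -> : (k - n.+1).+1 = (k - n)%N by lia.
by apply: IH; lia.
Qed.

Lemma big_nat_only1 (R : nzRingType) (F : nat -> R) m n j :
  (forall i, i != j -> F i = 0) ->
  \sum_(m <= i < n) F i = if (m <= j < n)%N then F j else 0.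
Proof.
move=> F0; elim: n => [|n IH]; first by rewrite big_geq // ltn0 andbF.
have [mn|nm] := leqP m n; last first.
  by rewrite big_geq //; case: ifP => // /andP[? ?]; lia.
rewrite big_nat_recr //= IH; have [->|jn] := eqVneq j n.
  by rewrite ltnn andbF mn ltnSn add0r.
rewrite (F0 n) 1?eq_sym // addr0.
by have -> : (j < n.+1)%N = (j < n)%N by move: jn; lia.
Qed.

Section blipped_down_outcome.
Context {R : realType} {d : measure_display} {Omega : measurableType d}.
Variables (Y A : nat -> Omega -> R) (g : nat -> nat -> Omega -> R).

Lemma Hc_Teq m n j w : (m <= j)%N -> Teq A j w ->
  Hc Y A g m n w = Y n w - (if (j < n)%N then g j n w else 0).
Proof.
move=> mj hj; rewrite /Hc (@big_nat_only1 _ (fun i => g i n w * \1_(Teq A i) w) m n j).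
- by rewrite indicE mem_set // mulr1 -[X in if X then _ else _]/(_ && _) mj.
- move=> i ij; rewrite indicE memNset ?mulr0 // => hi.
  by move: ij; rewrite (Teq_inj hi hj) eqxx.
Qed.

Lemma Hc_Tge m n w : Tge A n w -> Hc Y A g m n w = Y n w.
Proof.
move=> h; rewrite /Hc big_nat_cond big1 ?subr0 // => i /andP[/andP[_ i_n] _].
by rewrite indicE memNset ?mulr0 // => hi; exact: Teq_notTge i_n hi h.
Qed.

End blipped_down_outcome.

Section real_valued_integrals.
Context {R : realType} {d : measure_display} {Omega : measurableType d}.
Variable mu : {measure set Omega -> \bar R}.
Local Open Scope ereal_scope.

Definition Eint (D : set Omega) (h : Omega -> R) := \int[mu]_(w in D) (h w)%:E.

Lemma eq_Eint D h1 h2 : (forall w, D w -> h1 w = h2 w) -> Eint D h1 = Eint D h2.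
Proof. by move=> e; apply: eq_integral => w /[!inE] Dw; rewrite e. Qed.

Lemma Eint0 D h : (forall w, D w -> h w = 0%R) -> Eint D h = 0.
Proof. by move=> e; rewrite (@eq_Eint D h (fun=> 0%R)) //; exact: integral0. Qed.

Lemma EintB D h1 h2 : measurable D ->
  mu.-integrable D (EFin \o h1) -> mu.-integrable D (EFin \o h2) ->
  Eint D (fun w => h1 w - h2 w)%R = Eint D h1 - Eint D h2.
Proof. by move=> mD i1 i2; rewrite -integralB_EFin. Qed.

Lemma EintB_eq0 D h1 h2 : measurable D ->
  mu.-integrable D (EFin \o h1) -> mu.-integrable D (EFin \o h2) ->
  Eint D (fun w => h1 w - h2 w)%R = 0 <-> Eint D h1 = Eint D h2.
Proof.
move=> mD i1 i2; rewrite EintB //.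
have := integrable_fin_num mD i1; have := integrable_fin_num mD i2.
rewrite -/(Eint D h1) -/(Eint D h2).
case: (Eint D h1) => [x| |] //; case: (Eint D h2) => [y| |] // _ _.
by rewrite -EFinB; split => [[/eqP]|[->]]; rewrite ?subr_eq0 ?subrr // => /eqP ->.
Qed.

Lemma EintU D1 D2 h : measurable D1 -> measurable D2 -> [disjoint D1 & D2] ->
  mu.-integrable setT (EFin \o h) -> Eint (D1 `|` D2) h = Eint D1 h + Eint D2 h.
Proof.
move=> m1 m2 D12 ih; rewrite /Eint integral_setU //.
exact: measurable_funTS (measurable_int _ ih).
Qed.

Lemma integrable_mulr_indic D (g : Omega -> R) : measurable D ->
  mu.-integrable D (EFin \o g) ->
  mu.-integrable setT (EFin \o (fun w => g w * \1_D w)%R).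
Proof.
move=> mD /(integrable_mkcond _ mD); apply: eq_integrable => // w _.
by rewrite /patch /= indicE; case: ifP; rewrite ?mulr1 ?mulr0.
Qed.

Lemma integrableD_EFin (f g : Omega -> R) : mu.-integrable setT (EFin \o f) ->
  mu.-integrable setT (EFin \o g) -> mu.-integrable setT (EFin \o (fun w => f w + g w)%R).
Proof. by move=> i1 i2; exact: eq_integrable (integrableD measurableT i1 i2). Qed.

Lemma integrableB_EFin (f g : Omega -> R) : mu.-integrable setT (EFin \o f) ->
  mu.-integrable setT (EFin \o g) -> mu.-integrable setT (EFin \o (fun w => f w - g w)%R).
Proof. by move=> i1 i2; exact: eq_integrable (integrableB measurableT i1 i2). Qed.

Lemma integrable_sum_EFin (F : nat -> Omega -> R) m n :
  (forall i, (m <= i < n)%N -> mu.-integrable setT (EFin \o F i)) ->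
  mu.-integrable setT (EFin \o (fun w => \sum_(m <= i < n) F i w)%R).
Proof.
move=> hF; have := @integrable_sum _ _ _ mu setT measurableT _ (index_iota m n)
  (fun i => (m <= i < n)%N) (fun i w => (F i w)%:E) hF.
apply: eq_integrable => // w _ /=; rewrite sumEFin big_nat_cond.
by congr EFin; apply: eq_bigl => i; rewrite andbT.
Qed.

End real_valued_integrals.

Section coarse_blips.
Context {R : realType} {d : measure_display} {Omega : measurableType d}.
Variables (P : probability Omega R) (dz : measure_display) (Zt : measurableType dz)
  (K : nat) (Z : nat -> Omega -> Zt) (Y A : nat -> Omega -> R)
  (Yinf : nat -> Omega -> R) (Ycf : nat -> nat -> R -> Omega -> R)
  (gstar : nat -> nat -> Omega -> R).
Hypotheses
  (mZ : forall j, measurable_fun setT (Z j))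
  (mY : forall j, measurable_fun setT (Y j))
  (mA : forall j, measurable_fun setT (A j))
  (iYinf : forall k, (k <= K)%N -> P.-integrable setT (EFin \o Yinf k))
  (iYcf : forall m k, (m < k <= K)%N ->
     P.-integrable setT (EFin \o (fun w => Ycf k m (A m w) w)))
  (Ycf_early : forall k m a, (k <= m)%N -> Ycf k m a = Yinf k)
  (Y_Teq_lt : forall m k, (m < k <= K)%N ->
     forall w, Teq A m w -> Y k w = Ycf k m (A m w) w)
  (Y_Tge : forall k, (k <= K)%N -> forall w, Tge A k w -> Y k w = Yinf k w)
  (trends : forall m k, (m < k <= K)%N -> forall f g : Omega -> R,
     cexp_version P (LAsig Z Y A m) (Teq A m) (fun w => Yinf k w - Yinf k.-1 w) f ->
     cexp_version P (Lsig Z Y A m) (Tgt A m) (fun w => Yinf k w - Yinf k.-1 w) g ->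
     {ae P, forall w, Teq A m w -> f w = g w})
  (gstarE : forall m k, (m < k <= K)%N ->
     cexp_version P (LAsig Z Y A m) (Teq A m)
       (fun w => Ycf k m (A m w) w - Yinf k w) (gstar m k)).

Local Notation Tge_measurable := (Tge_measurable mZ mY mA).
Local Notation Teq_measurable := (Teq_measurable mZ mY mA).
Local Notation Tgt_measurable := (Tgt_measurable mZ mY mA).
Local Notation Lsig_measurable := (Lsig_measurable mZ mY mA).
Local Notation LAsig_measurable := (LAsig_measurable mZ mY mA).

Definition dH (g : nat -> nat -> Omega -> R) m k w :=
  Hc Y A g m k w - Hc Y A g m k.-1 w.
Definition dYinf k w := Yinf k w - Yinf k.-1 w.

Lemma Y_Teq n j w : (n <= K)%N -> Teq A j w -> Y n w = Ycf n j (A j w) w.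
Proof.
move=> nK hj; have [jn|nj] := ltnP j n; first by apply: Y_Teq_lt; rewrite ?jn.
by rewrite Ycf_early // Y_Tge //; exact: Tge_subset nj _ (Teq_subset_Tge hj).
Qed.

Lemma integrable_Y k : (k <= K)%N -> P.-integrable setT (EFin \o Y k).
Proof.
move=> kK; pose g j w := Ycf k j (A j w) w.
have Y_split w : Y k w =
    Yinf k w * \1_(Tge A k) w + \sum_(0 <= j < k) g j w * \1_(Teq A j) w.
  have -> : \sum_(0 <= j < k) g j w * \1_(Teq A j) w =
      Y k w - Hc Y A (fun j _ => g j) 0 k w by rewrite /Hc opprB addrC subrK.
  case: (Tge_or_Teq A k w) => [h|[j jk h]].
  - by rewrite indicE mem_set // mulr1 Hc_Tge // subrr addr0 Y_Tge.
  - rewrite indicE memNset ?mulr0 ?add0r; last exact: Teq_notTge jk h.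
    by rewrite (Hc_Teq _ _ _ (leq0n j) h) jk (Y_Teq kK h) opprB addrC subrK.
apply: eq_integrable (integrableD_EFin _ _) => [//|w _||]; first by rewrite /= Y_split.
- apply: integrable_mulr_indic; first exact: Tge_measurable.
  by apply: integrableS (iYinf kK) => //; exact: Tge_measurable.
- apply: integrable_sum_EFin => j /andP[_ jk].
  apply: integrable_mulr_indic; first exact: Teq_measurable.
  by apply: integrableS (iYcf _) => //; [exact: Teq_measurable|rewrite jk].
Qed.

Lemma integrable_Hc (g : nat -> nat -> Omega -> R) m n : (n <= K)%N ->
  (forall j, (m <= j < n)%N -> P.-integrable (Teq A j) (EFin \o g j n)) ->
  P.-integrable setT (EFin \o Hc Y A g m n).
Proof.
move=> nK hg; apply: integrableB_EFin; first exact: integrable_Y.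
apply: integrable_sum_EFin => j jn; apply: integrable_mulr_indic; last exact: hg.
exact: Teq_measurable.
Qed.

Lemma integrable_dH (g : nat -> nat -> Omega -> R) m k : (m < k <= K)%N ->
  (forall i j, (m <= i < j)%N -> (j <= K)%N -> P.-integrable (Teq A i) (EFin \o g i j)) ->
  P.-integrable setT (EFin \o dH g m k).
Proof.
move=> /andP[mk kK] hg; apply: integrableB_EFin.
- by apply: integrable_Hc => // j /andP[mj jk]; apply: hg; rewrite ?mj.
- apply: integrable_Hc => [|j /andP[mj jk]]; first lia.
  by apply: hg; [apply/andP; split|]; lia.
Qed.

Lemma integrable_gstar m k : (m < k <= K)%N -> P.-integrable (Teq A m) (EFin \o gstar m k).
Proof. by case/gstarE. Qed.

Lemma integrable_dYinf k : (k <= K)%N -> P.-integrable setT (EFin \o dYinf k).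
Proof. by move=> kK; apply: integrableB_EFin; apply: iYinf; lia. Qed.

Lemma integrable_dH_gstar m k : (m < k <= K)%N -> P.-integrable setT (EFin \o dH gstar m k).
Proof.
by move=> mkK; apply: integrable_dH => // i j /andP[_ ij] jK; apply: integrable_gstar; rewrite ij.
Qed.

(* On [{T = j}], [dH gstar m k - dYinf k] is the increment from [k.-1] to [k] of
   this residual. *)
Definition blip_residual j n w :=
  (Ycf n j (A j w) w - Yinf n w) - (if (j < n)%N then gstar j n w else 0).

Lemma blip_residual_Teq j n S : (n <= K)%N -> LAsig Z Y A j S ->
  P.-integrable (Teq A j `&` S) (EFin \o blip_residual j n) /\
  Eint P (Teq A j `&` S) (blip_residual j n) = 0%E.
Proof.
move=> nK hS; have mD : measurable (Teq A j `&` S).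
  by apply: measurableI; [exact: Teq_measurable|exact: LAsig_measurable hS].
have [jn|nj] := ltnP j n; last first.
  have res0 w : blip_residual j n w = 0.
    by rewrite /blip_residual ltnNge nj /= Ycf_early // subrr subr0.
  split; last by apply: Eint0 => w _; exact: res0.
  by apply: eq_integrable (integrable0 P _) => // w _ /=; rewrite res0.
have jnK : (j < n <= K)%N by rewrite jn.
have [_ iY ig e] := gstarE jnK.
have iY' : P.-integrable (Teq A j `&` S) (EFin \o (fun w => Ycf n j (A j w) w - Yinf n w)).
  by apply: integrableS iY => //; exact: Teq_measurable.
have ig' : P.-integrable (Teq A j `&` S) (EFin \o gstar j n).
  by apply: integrableS ig => //; exact: Teq_measurable.
have resE w : blip_residual j n w = (Ycf n j (A j w) w - Yinf n w) - gstar j n w.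
  by rewrite /blip_residual jn.
split.
- by apply: eq_integrable (integrableB mD iY' ig') => // w _ /=; rewrite resE.
- by rewrite (eq_Eint P (fun w _ => resE w)) (EintB_eq0 mD iY' ig'); exact: e.
Qed.

Lemma Eint_dH_Teq m k j S : (m <= j < k)%N -> (k <= K)%N -> LAsig Z Y A j S ->
  Eint P (Teq A j `&` S) (fun w => dH gstar m k w - dYinf k w) = 0%E.
Proof.
move=> /andP[mj jk] kK hS; have k1K : (k.-1 <= K)%N by lia.
have mD : measurable (Teq A j `&` S).
  by apply: measurableI; [exact: Teq_measurable|exact: LAsig_measurable hS].
have [ik ek] := blip_residual_Teq kK hS; have [ik1 ek1] := blip_residual_Teq k1K hS.
have dHE w : (Teq A j `&` S) w ->
    dH gstar m k w - dYinf k w = blip_residual j k w - blip_residual j k.-1 w.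
  move=> [hj _]; rewrite /dH /dYinf !(Hc_Teq _ _ _ mj hj) (Y_Teq kK hj) (Y_Teq k1K hj).
  by rewrite /blip_residual jk; ring.
by rewrite (eq_Eint P dHE) EintB // ek ek1 sube0.
Qed.

Lemma Eint_dH_Tge m k S : (m < k <= K)%N -> Lsig Z Y A m S ->
  forall i, (m <= i <= k)%N ->
  Eint P (Tge A i `&` S) (fun w => dH gstar m k w - dYinf k w) = 0%E.
Proof.
move=> /[dup] mkK /andP[mk kK] hS i /andP[mi ik].
have mS := Lsig_measurable hS.
apply: (nat_down_ind (Q := fun i => Eint P (Tge A i `&` S) _ = 0%E) ik).
  apply: Eint0 => w [hw _]; have hw' : Tge A k.-1 w by apply: Tge_subset hw; lia.
  by rewrite /dH /dYinf !Hc_Tge // !Y_Tge // ?subrr //; lia.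
move=> j /andP[ij jk] IH.
rewrite TgeE setIUl EintU //.
- rewrite IH Eint_dH_Teq ?adde0 //; first by apply/andP; split; lia.
  by apply: Lsig_sub_LAsig hS; lia.
- by apply: measurableI => //; exact: Teq_measurable.
- by apply: measurableI => //; exact: Tgt_measurable.
- by apply/disj_setPS => w [[h1 _] [h2 _]]; exact: Teq_notTge (ltnSn j) h1 h2.
- exact: integrableB_EFin (integrable_dH_gstar mkK) (integrable_dYinf kK).
Qed.

Lemma cexp_version_Tge_Tgt m (X f g : Omega -> R) :
  cexp_version P (LAsig Z Y A m) (Tge A m) X f ->
  cexp_version P (Lsig Z Y A m) (Tgt A m) X g ->
  {ae P, forall w, Tgt A m w -> f w = g w}.
Proof.
move=> [mf _ if_ ef] [mg _ _ eg].
apply: (cexp_version_ae_unique (histA_gen_measurable mZ mY mA (m:=m)) (Tgt_measurable m)).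
- exact: mf.
- by move=> U mU; exact (Lsig_sub_LAsig (leqnn m) (mg U mU)).
- apply: integrableS if_ => //.
  + exact: Tge_measurable.
  + exact: Tgt_measurable.
  + exact: Tgt_subset_Tge.
- move=> S hS; have [S' hS' e] := LAsig_trace_Tgt hS.
  have := ef _ (LAsigI (Tgt_LAsig (m:=m)) hS).
  rewrite setIA (@setIidr _ (Tge A m)); last exact: Tgt_subset_Tge.
  by move=> <-; rewrite setIC e setIC; exact: eg.
Qed.

Lemma cexp_dH_Teq m k f : (m < k <= K)%N ->
  cexp_version P (LAsig Z Y A m) (Tge A m) (dH gstar m k) f ->
  cexp_version P (LAsig Z Y A m) (Teq A m) (dYinf k) f.
Proof.
move=> /[dup] mkK /andP[mk kK] [mf _ if_ ef]; split => //.
- by apply: integrableS (integrable_dYinf kK) => //; exact: Teq_measurable.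
- apply: integrableS if_ => //.
  + exact: Tge_measurable.
  + exact: Teq_measurable.
  + exact: Teq_subset_Tge.
- move=> S hS; have hTS := LAsigI (Teq_LAsig (m:=m)) hS.
  have mD := LAsig_measurable hTS.
  have := ef _ hTS; rewrite setIA (@setIidr _ (Tge A m)); last exact: Teq_subset_Tge.
  move=> <-; apply/esym/(EintB_eq0 mD).
  + exact: integrableS (integrable_dH_gstar mkK).
  + exact: integrableS (integrable_dYinf kK).
  + by apply: Eint_dH_Teq => //; rewrite leqnn.
Qed.

Lemma cexp_dH_Tgt m k g : (m < k <= K)%N ->
  cexp_version P (Lsig Z Y A m) (Tgt A m) (dH gstar m k) g ->
  cexp_version P (Lsig Z Y A m) (Tgt A m) (dYinf k) g.
Proof.
move=> /[dup] mkK /andP[mk kK] [mg _ ig eg]; split => //.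
- by apply: integrableS (integrable_dYinf kK) => //; exact: Tgt_measurable.
- move=> S hS; have mD : measurable (Tgt A m `&` S).
    by apply: measurableI; [exact: Tgt_measurable|exact: Lsig_measurable hS].
  rewrite -(eg _ hS); apply/esym/(EintB_eq0 mD).
  + exact: integrableS (integrable_dH_gstar mkK).
  + exact: integrableS (integrable_dYinf kK).
  + by apply: (Eint_dH_Tge mkK hS (i := m.+1)); rewrite leqnSn mk.
Qed.

Lemma coarse_star_gstar m k : (m < k <= K)%N -> coarse_star P Z Y A gstar m k.
Proof.
move=> mkK f g vf vg.
have onTeq := trends mkK (cexp_dH_Teq mkK vf) (cexp_dH_Tgt mkK vg).
have onTgt := cexp_version_Tge_Tgt vf vg.
by apply: filterS2 onTeq onTgt => w h1 h2; rewrite TgeE => -[/h1|/h2].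
Qed.

Section uniqueness.
Variable gamma : nat -> nat -> Omega -> R.
Hypotheses
  (mgamma : forall m k, (m < k <= K)%N ->
     forall U : set R, measurable U -> LAsig Z Y A m (gamma m k @^-1` U))
  (igamma : forall m k, (m < k <= K)%N -> P.-integrable (Teq A m) (EFin \o gamma m k))
  (star_gamma : forall m k, (m < k <= K)%N -> coarse_star P Z Y A gamma m k).

Lemma integrable_dH_gamma m k : (m < k <= K)%N -> P.-integrable setT (EFin \o dH gamma m k).
Proof.
by move=> mkK; apply: integrable_dH => // i j /andP[_ ij] jK; apply: igamma; rewrite ij.
Qed.

Lemma dH_gamma_ae n m k : (forall i j, (i < j <= K)%N -> (j - i <= n)%N ->
    {ae P, forall w, Teq A i w -> gamma i j w = gstar i j w}) ->
  (m < k <= K)%N -> (k - m <= n.+1)%N ->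
  {ae P, forall w, Tge A m w ->
     dH gamma m k w = dH gstar m k w - (gamma m k w - gstar m k w) * \1_(Teq A m) w}.
Proof.
move=> IH /andP[mk kK] kmn.
pose dH_eq w := dH gamma m k w =
  dH gstar m k w - (gamma m k w - gstar m k w) * \1_(Teq A m) w.
apply: (nat_down_ind (Q := fun i => {ae P, forall w, Tge A i w -> dH_eq w}) (ltnW mk)).
  apply: aeW => w hw; have hw' : Tge A k.-1 w by apply: Tge_subset hw; lia.
  rewrite /dH_eq /dH !Hc_Tge // indicE memNset ?mulr0 ?subr0 //.
  by move=> h; exact: Teq_notTge mk h hw.
move=> i /andP[mi ik] Qi.
have agree_k : {ae P, forall w, Teq A i w -> (m < i)%N -> gamma i k w = gstar i k w}.
  have [mi'|im] := ltnP m i; last by apply: aeW => w _ ?; lia.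
  by apply: filterS (IH i k _ _) => [w hw /hw //||]; [rewrite ik|lia].
have agree_k1 : {ae P, forall w, Teq A i w -> (i < k.-1)%N ->
    gamma i k.-1 w = gstar i k.-1 w}.
  have [ik1|k1i] := ltnP i k.-1; last by apply: aeW => w _ ?; lia.
  by apply: filterS (IH i k.-1 _ _) => [w hw /hw //||]; [rewrite ik1; lia|lia].
apply: filterS3 agree_k agree_k1 Qi => w e1 e2 q; rewrite TgeE => -[hi|]; last exact: q.
rewrite /dH_eq /dH !(Hc_Teq _ _ _ mi hi) ik.
have [eim|nim] := eqVneq i m.
  subst i; rewrite indicE mem_set // mulr1.
  by case: ifPn => h; rewrite ?(e2 hi h); ring.
have nT : ~ Teq A m w by move=> hm; move: nim; rewrite (Teq_inj hi hm) eqxx.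
rewrite indicE memNset // mulr0 subr0 e1 //; last by move: nim mi; lia.
by case: ifPn => h; rewrite ?(e2 hi h).
Qed.

Section shifted_versions.
Variables (m k : nat) (mkK : (m < k <= K)%N).
Let D w := gamma m k w - gstar m k w.
Hypothesis dH_gammaE :
  {ae P, forall w, Tge A m w -> dH gamma m k w = dH gstar m k w - D w * \1_(Teq A m) w}.

Let integrable_D1 : P.-integrable setT (EFin \o (fun w => D w * \1_(Teq A m) w)).
Proof.
apply: integrable_mulr_indic; first exact: Teq_measurable.
have TeqM := Teq_measurable m.
by apply: (eq_integrable TeqM _ _ _ (integrableB TeqM (igamma mkK) (integrable_gstar mkK))).
Qed.

Lemma cexp_dH_gamma_Tge fs :
  cexp_version P (LAsig Z Y A m) (Tge A m) (dH gstar m k) fs ->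
  cexp_version P (LAsig Z Y A m) (Tge A m) (dH gamma m k)
    (fun w => fs w - D w * \1_(Teq A m) w).
Proof.
have TgeM := Tge_measurable m.
move=> [mfs _ ifs efs]; split.
- apply/measurable_fun_genP; apply: measurable_funB; first exact/measurable_fun_genP.
  apply: measurable_funM; last by apply: measurable_indic; exact: Teq_LAsig.
  by apply: measurable_funB; apply/measurable_fun_genP; [exact: mgamma|case: (gstarE mkK)].
- exact: integrableS (integrable_dH_gamma mkK).
- have iD1 := integrableS measurableT TgeM (subsetT _) integrable_D1.
  by apply: (eq_integrable TgeM _ _ _ (integrableB TgeM ifs iD1)).
- move=> S hS; have mTS : measurable (Tge A m `&` S).
    by apply: measurableI => //; exact: LAsig_measurable hS.
  change (Eint P (Tge A m `&` S) (dH gamma m k) =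
    Eint P (Tge A m `&` S) (fun w => fs w - D w * \1_(Teq A m) w)).
  have i1 := integrableS measurableT mTS (subsetT _) (integrable_dH_gstar mkK).
  have i2 := integrableS measurableT mTS (subsetT _) integrable_D1.
  have i3 := integrableS TgeM mTS (@subIsetl _ _ S) ifs.
  have efsS : Eint P (Tge A m `&` S) (dH gstar m k) = Eint P (Tge A m `&` S) fs.
    exact: efs.
  rewrite (EintB mTS i3 i2) -efsS -(EintB mTS i1 i2).
  apply: ae_eq_integral => //.
  + exact: measurable_funTS (measurable_int _ (integrable_dH_gamma mkK)).
  + exact: measurable_funTS (measurable_int _ (integrableB_EFin (integrable_dH_gstar mkK) integrable_D1)).
  + by apply: filterS dH_gammaE => w h [hw _]; rewrite /= h.
Qed.

Lemma cexp_dH_gamma_Tgt gs :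
  cexp_version P (Lsig Z Y A m) (Tgt A m) (dH gstar m k) gs ->
  cexp_version P (Lsig Z Y A m) (Tgt A m) (dH gamma m k) gs.
Proof.
have TgtM := Tgt_measurable m.
move=> [mgs _ igs egs]; split => //; first exact: integrableS (integrable_dH_gamma mkK).
move=> S hS; have mTS : measurable (Tgt A m `&` S).
  by apply: measurableI => //; exact: Lsig_measurable hS.
rewrite -(egs S hS); apply: ae_eq_integral => //.
- exact: measurable_funTS (measurable_int _ (integrable_dH_gamma mkK)).
- exact: measurable_funTS (measurable_int _ (integrable_dH_gstar mkK)).
- apply: filterS dH_gammaE => w h [hw _]; rewrite /= h ?indicE ?memNset ?mulr0 ?subr0 //.
  + by move=> hm; exact: Teq_notTge (ltnSn m) hm hw.
  + exact: Tgt_subset_Tge.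
Qed.

End shifted_versions.

Lemma gamma_gstar_ae_step n m k : (forall i j, (i < j <= K)%N -> (j - i <= n)%N ->
    {ae P, forall w, Teq A i w -> gamma i j w = gstar i j w}) ->
  (m < k <= K)%N -> (k - m <= n.+1)%N ->
  {ae P, forall w, Teq A m w -> gamma m k w = gstar m k w}.
Proof.
move=> IH mkK kmn; have dH_gammaE := dH_gamma_ae IH mkK kmn.
have TgeM := Tge_measurable m; have TgtM := Tgt_measurable m.
have [fs vfs] := cexp_version_exists (histA_gen_measurable mZ mY mA (m:=m)) TgeM
  (integrableS measurableT TgeM (subsetT _) (integrable_dH_gstar mkK)).
have [gs vgs] := cexp_version_exists (hist_gen_measurable mZ mY mA (m:=m)) TgtM
  (integrableS measurableT TgtM (subsetT _) (integrable_dH_gstar mkK)).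
have fs_gs := coarse_star_gstar mkK vfs vgs.
have f_gs := star_gamma mkK (cexp_dH_gamma_Tge mkK dH_gammaE vfs)
  (cexp_dH_gamma_Tgt mkK dH_gammaE vgs).
apply: filterS2 fs_gs f_gs => w e1 e2 hw.
have := e2 (Teq_subset_Tge hw); rewrite -(e1 (Teq_subset_Tge hw)) indicE mem_set //.
by move/eqP; rewrite mulr1 subr_eq addrC -subr_eq subrr eq_sym subr_eq0 => /eqP.
Qed.

Lemma gamma_gstar_ae m k : (m < k <= K)%N ->
  {ae P, forall w, Teq A m w -> gamma m k w = gstar m k w}.
Proof.
suff gap_ind n i j : (i < j <= K)%N -> (j - i <= n)%N ->
    {ae P, forall w, Teq A i w -> gamma i j w = gstar i j w}.
  by move=> mk; exact: (gap_ind (k - m)%N).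
elim: n i j => [|n IH] i j ij ji; first by move: ij ji; lia.
exact: gamma_gstar_ae_step IH ij ji.
Qed.

End uniqueness.
End coarse_blips.

Theorem lemma3 (R : realType) (d : measure_display) (Omega : measurableType d)
  (P : probability Omega R) (dz : measure_display) (Zt : measurableType dz)
  (K : nat) (Z : nat -> Omega -> Zt) (Y A : nat -> Omega -> R)
  (Yinf : nat -> Omega -> R) (Ycf : nat -> nat -> R -> Omega -> R)
  (gstar : nat -> nat -> Omega -> R) :
  (* observed data are random variables *)
  (forall j, measurable_fun setT (Z j)) ->
  (forall j, measurable_fun setT (Y j)) ->
  (forall j, measurable_fun setT (A j)) ->
  (* integrability of the counterfactual outcomes *)
  (forall k, (k <= K)%N -> P.-integrable setT (EFin \o Yinf k)) ->
  (forall m k, (m < k <= K)%N ->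
     P.-integrable setT (EFin \o (fun w => Ycf k m (A m w) w))) ->
  (* Y_k(m, a_m) = Y_k(oo) for k <= m *)
  (forall k m a, (k <= m)%N -> Ycf k m a = Yinf k) ->
  (* coarse consistency *)
  (forall m k, (m < k <= K)%N -> forall w, Teq A m w -> Y k w = Ycf k m (A m w) w) ->
  (forall k, (k <= K)%N -> forall w, Tge A k w -> Y k w = Yinf k w) ->
  (* coarse positivity *)
  (forall m, (m <= K)%N -> forall p : Omega -> R,
     cexp_version P (Lsig Z Y A m) (Tge A m) (\1_[set w | A m w = 0]) p ->
     {ae P, forall w, Tge A m w -> 0 < p w}) ->
  (* coarse parallel trends *)
  (forall m k, (m < k <= K)%N -> forall f g : Omega -> R,
     cexp_version P (LAsig Z Y A m) (Teq A m) (fun w => Yinf k w - Yinf k.-1 w) f ->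
     cexp_version P (Lsig Z Y A m) (Tgt A m) (fun w => Yinf k w - Yinf k.-1 w) g ->
     {ae P, forall w, Teq A m w -> f w = g w}) ->
  (* gstar are the true coarse blip functions (versions of the defining
     conditional expectations, measurable in (Lbar_m, A_m)) *)
  (forall m k, (m < k <= K)%N ->
     cexp_version P (LAsig Z Y A m) (Teq A m)
       (fun w => Ycf k m (A m w) w - Yinf k w) (gstar m k)) ->
  (forall m k, (m < k <= K)%N -> coarse_star P Z Y A gstar m k) /\
  (forall gamma : nat -> nat -> Omega -> R,
     (forall m k, (m < k <= K)%N ->
        forall U : set R, measurable U -> LAsig Z Y A m (gamma m k @^-1` U)) ->
     (forall m k, (m < k <= K)%N -> P.-integrable (Teq A m) (EFin \o gamma m k)) ->
     (forall m k, (m < k <= K)%N -> coarse_star P Z Y A gamma m k) ->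
     forall m k, (m < k <= K)%N ->
       {ae P, forall w, Teq A m w -> gamma m k w = gstar m k w}).
Proof.
move=> mZ mY mA iYinf iYcf Ycf_early Y_Teq_lt Y_Tge _ trends gstarE; split.
- exact: (coarse_star_gstar mZ mY mA iYinf iYcf Ycf_early Y_Teq_lt Y_Tge trends gstarE).
- move=> gamma mgamma igamma star_gamma m k.
  exact: (gamma_gstar_ae mZ mY mA iYinf iYcf Ycf_early Y_Teq_lt Y_Tge trends gstarE
    mgamma igamma star_gamma).
Qed.
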